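(* Consider a non-explosive stochastic reaction network as in the context with product-form propensities, and fix $T>0$ and $c^*>0$. Suppose that (a) (Property 1 at $(T,c^* )$) for every unconsuming reaction $j \in \mathcal{U}$ there exists $\epsilon_j>0$ with $\mathbb{E}\left(e^{\epsilon_j R_j(T,c^* )}\right) < \infty$; and (b) either reaction $1$ is unconsuming ($1 \in \mathcal{U}$), or $1\in\mathcal{C}$ and for every $y \in [0,\infty)^n$ the set \[ \mathcal{R}_y = \Big\{ \xi = (\xi_j)_{j\in\mathcal{C}} \in [0,\infty)^{\mathcal{C}} : y + \sum_{j\in\mathcal{C}} \nu_j \xi_j \ge 0 \text{ componentwise} \Big\} \] is bounded in the coordinate $\xi_1$, i.e. $\sup\{\xi_1 : \xi \in \mathcal{R}_y\}<\infty$. Then there exists $\epsilon>0$ such that \[ \mathbb{E}\left[ \left(\frac{c^*+\epsilon}{c^*}\right)^{R_1(T,c^* )} \right] < \infty . \]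
   Context: Stochastic reaction network: $n$ species, $m$ reaction channels with stoichiometric vectors $\nu_j = (\nu_{1j},\dots,\nu_{nj}) \in \mathbb{Z}^n$ and propensities of product form $a_j(x,c_j) = c_j b_j(x)$ with $c_j>0$ and $b_j:\mathbb{Z}_+^n\to[0,\infty)$; the parameter of interest is $c=c_1$ with nominal value $c^*$. On a probability space carrying independent unit-rate Poisson processes $Y_1,\dots,Y_m$, $X(t,c) = x_0 + \sum_j \nu_j R_j(t,c)$, $R_j(t,c) = Y_j\left(\int_0^t a_j(X(s,c),c)\,ds\right)$, with fixed $x_0 \in \mathbb{Z}_+^n$; non-explosive means $R_j(t,c)<\infty$ a.s. for all $t,c,j$. A reaction $j$ is called unconsuming if $\nu_{ij}\ge 0$ for all $i=1,\dots,n$, and consuming otherwise; $\mathcal{U}$ and $\mathcal{C}$ denote the index sets of unconsuming and consuming reactions. *)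

From HB Require Import structures.
From mathcomp Require Import all_boot all_order all_algebra.
From mathcomp Require Import all_classical all_reals all_analysis.
Set Implicit Arguments. Unset Strict Implicit. Unset Printing Implicit Defensive.
Import Order.TTheory GRing.Theory Num.Theory.
Local Open Scope classical_set_scope.
Local Open Scope ring_scope.

Definition poisson_pmf {R : realType} (lam : R) (k : nat) : R :=
  expR (- lam) * lam ^+ k / (k`!)%:R.

(* Y : 'I_m -> Omega -> R -> nat is a family of m mutually independent
   unit-rate Poisson processes on the probability space (Omega, P):
   - every path starts at 0, is nondecreasing and right-continuous on [0,oo);
   - each Y j t is a random variable;
   - joint finite-dimensional distributions: for every grid
     0 = t_0 < t_1 < ... < t_k and all integers n_{j,i}, the probability that
     Y_j(t_{i+1}) - Y_j(t_i) = n_{j,i} for all j < m, i < k equals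
     prod_j prod_i Poisson(t_{i+1}-t_i)(n_{j,i})
     (independent Poisson increments, independent across channels). *)
Definition indep_unit_poisson {d} {Omega : measurableType d} {R : realType}
  (P : probability Omega R) (m : nat) (Y : 'I_m -> Omega -> R -> nat) : Prop :=
  [/\ (forall j w, Y j w 0 = 0%N),
      (forall j w s t, 0 <= s -> s <= t -> (Y j w s <= Y j w t)%N),
      (forall j w t, 0 <= t ->
          exists2 e : R, 0 < e & forall s, t <= s -> s < t + e -> Y j w s = Y j w t),
      (forall j t, measurable_fun [set: Omega] (fun w => (Y j w t)%:R : R)) &
      (forall (k : nat) (tt : nat -> R) (nn : 'I_m -> nat -> nat),
          tt 0%N = 0 -> (forall i, tt i < tt i.+1) ->
          P [set w | forall (j : 'I_m) (i : nat), (i < k)%N ->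
                       (Y j w (tt i.+1) - Y j w (tt i))%N = nn j i]
          = (\prod_(j < m) \prod_(i < k) poisson_pmf (tt i.+1 - tt i) (nn j i))%:E)].

Definition unconsuming (n m : nat) (nu : 'I_m -> 'I_n -> int) (j : 'I_m) : Prop :=
  forall i : 'I_n, (0 <= nu j i)%R.

Definition consuming (n m : nat) (nu : 'I_m -> 'I_n -> int) (j : 'I_m) : Prop :=
  ~ unconsuming nu j.

(* The rate constants: c_1 = c (the parameter of interest, reaction index
   j1), c_j = cs j for the other reactions. *)
Definition rate {R : realType} (m : nat) (j1 : 'I_m) (cs : 'I_m -> R) (c : R)
  (j : 'I_m) : R := if j == j1 then c else cs j.

Definition time_change_repr {d} {Omega : measurableType d} {R : realType}
  (P : probability Omega R) (n m : nat) (nu : 'I_m -> 'I_n -> int)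
  (b : 'I_m -> ('I_n -> nat) -> R) (cc : 'I_m -> R) (x0 : 'I_n -> nat)
  (Y : 'I_m -> Omega -> R -> nat)
  (X : Omega -> R -> ('I_n -> nat)) (Rc : 'I_m -> Omega -> R -> nat) : Prop :=
  (forall j t, measurable_fun [set: Omega] (fun w => (Rc j w t)%:R : R)) /\
  {ae P, forall w, forall t : R, 0 <= t ->
     (forall i : 'I_n, ((X w t i)%:Z = (x0 i)%:Z + \sum_(j < m) nu j i * (Rc j w t)%:Z)%R) /\
     (forall j : 'I_m,
        measurable_fun `[0, t] (fun s => cc j * b j (X w s)) /\
        exists r : R,
          (\int[lebesgue_measure]_(s in `[0%R, t]%classic) (cc j * b j (X w s))%:E = r%:E)%E
          /\ Rc j w t = Y j w r)}.

From HB Require Import structures.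
From mathcomp Require Import all_boot all_order all_algebra.
From mathcomp Require Import all_classical all_reals all_analysis.
Import Order.TTheory GRing.Theory Num.Theory.
Local Open Scope classical_set_scope.
Local Open Scope ring_scope.

(* With eps = c* (e^a - 1) the integrand is exp (a R_1(T)), so it suffices to
   find a > 0 with E exp (a R_1(T)) < oo.  Only the balance
   X(T) = x0 + sum_j nu_j R_j(T) >= 0 is used, not the Poisson dynamics.
   If reaction 1 is unconsuming, (a) applies to it directly.  Otherwise
   y := x0 + sum_(j unconsuming) nu_j R_j(T) is nonnegative and the consuming
   counts lie in the feasible set R_y.  Feasible sets grow with y and scale
   linearly, so R_y is contained in (1 + sum_i y_i) R_(1,...,1) and (b) at
   y = (1,...,1) bounds R_1(T) by an affine function of the unconsuming
   counts.  Finally exp (a sum_j x_j) <= 1 + sum_j exp (a m x_j) for x >= 0,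
   and the right-hand side is integrable for small a by (a). *)

Lemma ler_sum_mul_sum (R : numDomainType) (I : finType) (p : pred I) (a x : I -> R) :
  (forall i, p i -> 0 <= a i) -> (forall i, p i -> 0 <= x i) ->
  \sum_(i | p i) a i * x i <= (\sum_(i | p i) a i) * \sum_(i | p i) x i.
Proof.
move=> a0 x0; rewrite mulr_sumr; apply: ler_sum => i pi.
apply: ler_wpM2r; first exact: x0.
by rewrite (bigD1 i) //= lerDl sumr_ge0 // => k /andP[pk _]; exact: a0.
Qed.

Section ExponentialBounds.
Variable R : realType.

Lemma expR_sum_le (m : nat) (p : pred 'I_m) (x : 'I_m -> R) :
  (forall j, 0 <= x j) ->
  expR (\sum_(j < m | p j) x j) <= 1 + \sum_(j < m | p j) expR (m%:R * x j).
Proof.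
move=> x0.
have [[j pj]|np] := pselect (exists j, p j); last first.
  rewrite big_pred0 => [|j]; last by apply/negP => pj; apply: np; exists j.
  by rewrite expR0 lerDl sumr_ge0 // => i _; exact: expR_ge0.
have [j0 pj0 j0max] := @eq_bigmax _ _ _ 0 j p x pj (fun i _ => x0 i).
set M := \big[Order.max/0]_(j | p j) x j in j0max.
have sum_le : \sum_(j < m | p j) x j <= m%:R * M.
  apply: (@le_trans _ _ (\sum_(j < m) M)); last by rewrite sumr_const card_ord mulr_natl.
  rewrite [leRHS](bigID p) /= -[leLHS]addr0 lerD ?sumr_ge0 ?bigmax_ge_id //.
  by apply: ler_sum => i pi; exact: le_bigmax_cond.
apply: (@le_trans _ _ (expR (m%:R * x j0))); first by rewrite -j0max ler_expR.
rewrite ler_wpDl // (bigD1 j0) //= lerDl sumr_ge0 // => i _; exact: expR_ge0.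
Qed.

Lemma expR_linear_bound (m : nat) (p : pred 'I_m) (x : 'I_m -> R) (y A D a e : R) :
  (forall j, 0 <= x j) -> 0 <= a -> 0 <= D -> a * D * m%:R <= e ->
  y <= A + D * \sum_(j < m | p j) x j ->
  expR (a * y) <= expR (a * A) * (1 + \sum_(j < m | p j) expR (e * x j)).
Proof.
move=> x0 a0 D0 aDe yle.
apply: (@le_trans _ _ (expR (a * A + \sum_(j < m | p j) (a * D) * x j))).
  by rewrite ler_expR -mulr_sumr -mulrA -mulrDr ler_wpM2l.
rewrite expRD ler_wpM2l ?expR_ge0 //.
have aDx0 j : 0 <= a * D * x j by rewrite !mulr_ge0.
apply: le_trans (@expR_sum_le m p _ aDx0) _.
rewrite lerD2l; apply: ler_sum => j _; rewrite ler_expR mulrA.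
by rewrite ler_wpM2r // mulrC.
Qed.

End ExponentialBounds.

Section ExponentialMoments.
Context {d} {Omega : measurableType d} {R : realType} (P : probability Omega R).

Definition finite_exp_moment (e : R) (f : Omega -> R) : Prop :=
  (\int[P]_w (expR (e * f w))%:E < +oo)%E.

Lemma measurable_expRM (e : R) (f : Omega -> R) :
  measurable_fun setT f -> measurable_fun setT (fun w => expR (e * f w)).
Proof.
move=> mf; apply: measurableT_comp; first exact: measurable_realfun.measurable_expR.
exact: measurable_realfun.measurable_funM.
Qed.

Lemma finite_exp_moment_le (e e' : R) (f : Omega -> R) :
  measurable_fun setT f -> (forall w, 0 <= f w) -> e <= e' ->
  finite_exp_moment e' f -> finite_exp_moment e f.
Proof.
move=> mf f0 ee' fin; apply: le_lt_trans fin; apply: ge0_le_integral => //.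
- by apply/measurable_realfun.measurable_EFinP; exact: measurable_expRM.
- by apply/measurable_realfun.measurable_EFinP; exact: measurable_expRM.
by move=> w _; rewrite lee_fin ler_expR ler_wpM2r.
Qed.

Lemma finite_exp_moment_integrable (e : R) (f : Omega -> R) :
  measurable_fun setT f -> finite_exp_moment e f ->
  P.-integrable setT (fun w => (expR (e * f w))%:E).
Proof.
move=> mf fin; apply/integrableP; split.
  by apply/measurable_realfun.measurable_EFinP; exact: measurable_expRM.
rewrite (eq_integral (fun w => (expR (e * f w))%:E)) // => w _.
by rewrite gee0_abs // lee_fin expR_ge0.
Qed.

Lemma finite_exp_moment_uniform {m : nat} {p : pred 'I_m} {f : 'I_m -> Omega -> R} :
  (forall j, measurable_fun setT (f j)) -> (forall j w, 0 <= f j w) ->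
  (forall j, p j -> exists2 e, 0 < e & finite_exp_moment e (f j)) ->
  exists2 e, 0 < e & forall j, p j -> finite_exp_moment e (f j).
Proof.
move=> mf f0 fin.
have /choice[e He] : forall j, exists e : R,
    0 < e /\ (p j -> finite_exp_moment e (f j)).
  move=> j; have [pj|npj] := boolP (p j); last by exists 1.
  by have [e e0 fe] := fin j pj; exists e.
exists (\big[Order.min/1]_(j < m) e j).
  by apply: lt_bigmin => // j _; case: (He j).
move=> j pj; apply: (@finite_exp_moment_le _ _ _ (mf j) (f0 j) _ ((He j).2 pj)).
exact: bigmin_le.
Qed.

Lemma finite_exp_moment_linear_bound {m : nat} {p : pred 'I_m}
    {f : 'I_m -> Omega -> R} {j1 : 'I_m} {A D e : R} :
  (forall j, measurable_fun setT (f j)) -> (forall j w, 0 <= f j w) ->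
  0 <= D -> 0 < e -> (forall j, p j -> finite_exp_moment e (f j)) ->
  {ae P, forall w, f j1 w <= A + D * \sum_(j < m | p j) f j w} ->
  exists2 a, 0 < a & finite_exp_moment a (f j1).
Proof.
move=> mf f0 D0 e0 fin bound.
have Dm0 : 0 < 1 + D * m%:R by rewrite ltr_wpDr // mulr_ge0.
pose a := e / (1 + D * m%:R).
have a0 : 0 < a by rewrite divr_gt0.
have aDe : a * D * m%:R <= e.
  rewrite -mulrA -[leRHS](@divfK _ (1 + D * m%:R)) ?gt_eqF //.
  by rewrite ler_wpM2l ?(ltW a0) // lerDr.
pose g w := ((expR (a * A))%:E * (1%:E + \sum_(j < m | p j) (expR (e * f j w))%:E))%E.
have g_int : P.-integrable setT g.
  apply: (integrableZl measurableT); apply: (integrableD measurableT).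
    exact: finite_measure_integrable_cst.
  apply: (integrable_sum measurableT) => j pj.
  exact: (@finite_exp_moment_integrable _ _ (mf j) (fin j pj)).
exists a => //; apply: le_lt_trans (integrable_lty measurableT g_int).
apply: ae_ge0_le_integral => //.
- by apply/measurable_realfun.measurable_EFinP; exact: measurable_expRM.
- move=> w _; rewrite /g sumEFin -EFinD -EFinM lee_fin mulr_ge0 ?expR_ge0 //.
  by rewrite addr_ge0 // sumr_ge0 // => j _; rewrite expR_ge0.
- by case/integrableP: g_int.
apply: filterS bound => w bound_w _.
rewrite /g sumEFin -EFinD -EFinM lee_fin.
exact: (@expR_linear_bound _ m p (f^~ w) _ A D a e (f0^~ w) (ltW a0) D0 aDe).
Qed.

End ExponentialMoments.

Section FeasibleCone.
Context {R : realFieldType} {n m : nat} {nu : 'I_m -> 'I_n -> int}.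
Context {C : pred 'I_m} {j1 : 'I_m} {M : R}.
Hypothesis M0 : 0 <= M.
Hypothesis bounded_at_one : forall xi : 'I_m -> R,
  (forall j, C j -> 0 <= xi j) ->
  (forall i, 0 <= 1 + \sum_(j < m | C j) (nu j i)%:~R * xi j) ->
  xi j1 <= M.

Lemma feasible_coord_le_scaled (y : 'I_n -> R) (xi : 'I_m -> R) :
  (forall i, 0 <= y i) -> (forall j, C j -> 0 <= xi j) ->
  (forall i, 0 <= y i + \sum_(j < m | C j) (nu j i)%:~R * xi j) ->
  xi j1 <= M * (1 + \sum_(i < n) y i).
Proof.
move=> y0 xi0 feasible.
set s := 1 + \sum_(i < n) y i.
have s0 : 0 < s by rewrite ltr_wpDr // sumr_ge0.
have ys i : y i <= s.
  by rewrite /s (bigD1 i) //= addrCA lerDl addr_ge0 // sumr_ge0.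
rewrite -ler_pdivrMr //.
apply: (bounded_at_one (fun j => xi j / s)) => [j Cj|i].
  by rewrite divr_ge0 ?xi0 ?ltW.
under eq_bigr do rewrite mulrA.
rewrite -mulr_suml -[X in X + _](divff (lt0r_neq0 s0)) -mulrDl.
apply: divr_ge0; last exact: ltW.
by apply: le_trans (feasible i) _; rewrite lerD2r.
Qed.

Lemma feasible_coord_le_linear (x0 : 'I_n -> R) (r : 'I_m -> R) :
  (forall j i, ~~ C j -> 0 <= (nu j i)%:~R :> R) ->
  (forall i, 0 <= x0 i) -> (forall j, 0 <= r j) ->
  (forall i, 0 <= x0 i + \sum_(j < m) (nu j i)%:~R * r j) ->
  r j1 <= M * (1 + \sum_(i < n) x0 i) +
          M * (\sum_(j < m | ~~ C j) \sum_(i < n) (nu j i)%:~R) *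
            \sum_(j < m | ~~ C j) r j.
Proof.
move=> nuU x00 r0 X0.
pose y i := x0 i + \sum_(j < m | ~~ C j) (nu j i)%:~R * r j.
have y0 i : 0 <= y i.
  by rewrite addr_ge0 // sumr_ge0 // => j Uj; rewrite mulr_ge0 ?nuU.
apply: le_trans (@feasible_coord_le_scaled y r y0 (fun j _ => r0 j) _) _.
  by move=> i; have := X0 i; rewrite (bigID C) /= addrA /y addrAC.
rewrite -mulrA -mulrDr ler_wpM2l //.
rewrite /y big_split /= addrA lerD2l exchange_big /=.
under eq_bigr do rewrite -mulr_suml.
by apply: ler_sum_mul_sum => j Uj; [apply: sumr_ge0 => i _; exact: nuU|exact: r0].
Qed.

End FeasibleCone.

Lemma unconsumingP (n m : nat) (nu : 'I_m -> 'I_n -> int) (j : 'I_m) :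
  reflect (unconsuming nu j) (~~ `[< consuming nu j >]).
Proof. by rewrite asbool_neg negbK; exact: asboolP. Qed.

Lemma expR_growth_factor (R : realType) (c a : R) :
  0 < c -> (c + c * (expR a - 1)) / c = expR a.
Proof. by move=> c0; rewrite mulrBr mulr1 addrC subrK mulrC mulKf ?gt_eqF. Qed.

Lemma reaction_count_linear_bound {R : realType} {n m : nat}
    {nu : 'I_m -> 'I_n -> int} {j1 : 'I_m} (x0 : 'I_n -> nat) {M : R} :
  (forall xi : 'I_m -> R, (forall j, consuming nu j -> 0 <= xi j) ->
    (forall i, 0 <= 1 + \sum_(j < m | `[< consuming nu j >]) (nu j i)%:~R * xi j) ->
    xi j1 <= M) ->
  exists A : R, exists2 D : R, 0 <= D & forall k : 'I_m -> nat,
    (forall i, 0 <= (x0 i)%:Z + \sum_(j < m) nu j i * (k j)%:Z) ->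
    (k j1)%:R <= A + D * \sum_(j < m | ~~ `[< consuming nu j >]) (k j)%:R.
Proof.
move=> M_ge.
pose C j := `[< consuming nu j >].
have M0 : 0 <= Num.max M 0 by rewrite le_max lexx orbT.
have nuU j i : ~~ C j -> 0 <= (nu j i)%:~R :> R.
  by move/unconsumingP/(_ i); rewrite ler0z.
have bounded_at_one xi : (forall j, C j -> 0 <= xi j) ->
    (forall i, 0 <= 1 + \sum_(j < m | C j) (nu j i)%:~R * xi j) -> xi j1 <= Num.max M 0.
  move=> xi0 feasible; apply: le_trans (M_ge xi _ feasible) _; last by rewrite le_max lexx.
  by move=> j /asboolP/xi0.
eexists; exists (Num.max M 0 * \sum_(j < m | ~~ C j) \sum_(i < n) (nu j i)%:~R).
  by rewrite mulr_ge0 // sumr_ge0 // => j Uj; rewrite sumr_ge0 // => i _; exact: nuU.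
move=> k X0.
apply: (feasible_coord_le_linear M0 bounded_at_one (fun i => (x0 i)%:R)
          (fun j => (k j)%:R)) => // i.
have -> : (x0 i)%:R + \sum_(j < m) (nu j i)%:~R * (k j)%:R =
    ((x0 i)%:Z + \sum_(j < m) nu j i * (k j)%:Z)%:~R :> R.
  by rewrite rmorphD rmorph_sum; congr (_ + _); apply: eq_bigr => j _; rewrite rmorphM.
by rewrite ler0z.
Qed.

Theorem mainTheorem6 (d : measure_display) (Omega : measurableType d)
  (R : realType) (P : probability Omega R)
  (n m : nat) (hm : (0 < m)%N)
  (nu : 'I_m -> 'I_n -> int) (b : 'I_m -> ('I_n -> nat) -> R)
  (cs : 'I_m -> R) (x0 : 'I_n -> nat)
  (Y : 'I_m -> Omega -> R -> nat)
  (X : R -> Omega -> R -> ('I_n -> nat))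
  (Rc : R -> 'I_m -> Omega -> R -> nat)
  (T cstar : R) :
  let j1 : 'I_m := Ordinal hm in
  (forall j x, 0 <= b j x) ->
  (forall j, 0 < cs j) ->
  indep_unit_poisson P Y ->
  (forall c, 0 < c -> time_change_repr P nu b (rate j1 cs c) x0 Y (X c) (Rc c)) ->
  0 < T -> 0 < cstar ->
  (forall j, unconsuming nu j ->
     exists2 eps : R, 0 < eps &
       (\int[P]_w (expR (eps * (Rc cstar j w T)%:R))%:E < +oo)%E) ->
  (unconsuming nu j1 \/
   (consuming nu j1 /\
    forall y : 'I_n -> R, (forall i, 0 <= y i) ->
      exists M : R, forall xi : 'I_m -> R,
        (forall j, consuming nu j -> 0 <= xi j) ->
        (forall i, 0 <= y i + \sum_(j < m | `[< consuming nu j >]) (nu j i)%:~R * xi j) ->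
        xi j1 <= M)) ->
  exists2 eps : R, 0 < eps &
    (\int[P]_w (((cstar + eps) / cstar) ^+ (Rc cstar j1 w T))%:E < +oo)%E.
Proof.
move=> j1 _ _ _ repr T0 cstar0 moment1 cond_b.
have [mRc repr_ae] := repr cstar cstar0.
pose r j w : R := (Rc cstar j w T)%:R.
have r0 j w : 0 <= r j w by exact: ler0n.
pose C j := `[< consuming nu j >].
have [e e0 moment] : exists2 e, 0 < e &
    forall j, ~~ C j -> finite_exp_moment P e (r j).
  apply: (finite_exp_moment_uniform P (p := fun j => ~~ C j) (mRc^~ T) r0).
  by move=> j /unconsumingP; exact: moment1.
have [A [D D0 bound]] : exists A, exists2 D, 0 <= D &
    {ae P, forall w, r j1 w <= A + D * \sum_(j < m | ~~ C j) r j w}.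
  case: cond_b => [U1|[_ boundedR]].
    exists 0, 1 => //; apply: aeW => w.
    rewrite add0r mul1r (bigD1 j1) /= ?lerDl ?sumr_ge0 //; exact/unconsumingP.
  have [M M_ge] := boundedR (fun _ => 1) (fun _ => ler01).
  have [A [D D0 count_le]] := reaction_count_linear_bound x0 M_ge.
  exists A, D => //; apply: filterS repr_ae => w /(_ T (ltW T0)) [X_eq _].
  by apply: count_le => i; rewrite -X_eq.
have [a a0 moment_j1] := finite_exp_moment_linear_bound P (mRc^~ T) r0 D0 e0 moment bound.
exists (cstar * (expR a - 1)); first by rewrite mulr_gt0 // subr_gt0 expR_gt1.
rewrite expR_growth_factor //.
under eq_integral do rewrite -expRM_natr.
exact: moment_j1.
Qed.
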